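(* Consider the state process of the load-balancing system described in the context (under any dispatching policy), and the Lyapunov function $V(s)=s_{1,2}-\frac{p}{\mu_2}$ on $\mathcal S^{(N)}$. For every $s\in\mathcal S^{(N)}$ with $V(s)\ge \frac{\log N}{4\sqrt N}$, the drift satisfies $\nabla V(s)\le -\frac{\mu_1\mu_2}{4}\frac{\log N}{\sqrt N}$.
   Context: System: $N$ identical servers, Poisson arrivals of rate $\lambda N$. Service times are Coxian-2 with parameters $(\mu_1,\mu_2,p)$, $\mu_1,\mu_2>0$, $0\le p<1$: a job in service completes phase 1 at rate $\mu_1$; then with probability $1-p$ it leaves, and with probability $p$ it enters phase 2, completed at rate $\mu_2$; $\frac1{\mu_1}+\frac p{\mu_2}=1$. Each server holds at most $b$ jobs (one in service, the rest in its buffer, served in order). The state $s=(s_{i,m})$ has $s_{i,m}$ = fraction of servers with at least $i$ jobs whose job in service is in phase $m$; state space $\mathcal S^{(N)}=\{s\in\mathbb R^{b\times2}: 1\ge s_{1,m}\ge\cdots\ge s_{b,m}\ge0,\ s_{1,1}+s_{1,2}\le1,\ Ns_{i,m}\in\mathbb N\}$. The state evolves as a CTMC with transition rates $q_{s,s'}$ induced by arrivals (dispatched by the policy), phase-1 completions, and phase-2 completions; the drift of $V$ at $s$ is $\nabla V(s)=\sum_{s'\ne s}q_{s,s'}(V(s')-V(s))$. *)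

From mathcomp Require Import all_boot all_order all_algebra.
From mathcomp Require Import reals exp.
Import Order.TTheory GRing.Theory Num.Theory.
Set Implicit Arguments. Unset Strict Implicit. Unset Printing Implicit Defensive.
Local Open Scope ring_scope.

Section Defs.
Variables (R : realType) (b : nat).

(* A state is a b x 2 real matrix; entry (i, m) (0-based) is the paper's
   s_{i+1, m+1}. *)
Definition state := 'M[R]_(b, 2).

(* Paper's s_{i,m} with 1-based indices; 0 outside 1 <= i <= b, 1 <= m <= 2
   (so in particular s_{b+1,m} = 0). *)
Definition sv (s : state) (i m : nat) : R :=
  if (0 < i)%N && (0 < m)%N then
    match (insub i.-1 : option 'I_b), (insub m.-1 : option 'I_2) with
    | Some i', Some m' => s i' m'
    | _, _ => 0
    end
  else 0.

Definition in_SN (N : nat) (s : state) : Prop :=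
  [/\ (forall m, (1 <= m <= 2)%N -> sv s 1 m <= 1),
      (forall i m, (1 <= i < b)%N -> (1 <= m <= 2)%N -> sv s i.+1 m <= sv s i m),
      (forall m, (1 <= m <= 2)%N -> 0 <= sv s b m),
      sv s 1 1 + sv s 1 2 <= 1
    & (forall i m, exists k : nat, N%:R * sv s i m = k%:R)].

(* Destination of an arriving job: None = an idle server;
   Some (i', m') = a server with exactly i'+1 jobs whose job in service is
   in phase m'+1 (if i'+1 = b the server is full and the job is lost). *)
Definition dest := option ('I_b * 'I_2).

Definition class_frac (s : state) (d : dest) : R :=
  match d with
  | None => 1 - sv s 1 1 - sv s 1 2
  | Some (i', m') => sv s i'.+1 m'.+1 - sv s i'.+2 m'.+1
  end.

Definition is_policy (N : nat) (pol : state -> dest -> R) : Prop :=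
  forall s, in_SN N s ->
    [/\ (forall d, 0 <= pol s d),
        \sum_(d : dest) pol s d = 1
      & (forall d, 0 < pol s d -> 0 < class_frac s d)].

(* s + delta/N, where delta is given with paper's 1-based indices. *)
Definition upd (N : nat) (s : state) (delta : nat -> nat -> R) : state :=
  \matrix_(i, m) (s i m + delta i.+1 m.+1 / N%:R).

(* phase-1 completion at a server with exactly i jobs, job moves to phase 2 *)
Definition d_12 (i : nat) : nat -> nat -> R := fun j m =>
  if (1 <= j <= i)%N then (if m == 1%N then -1 else if m == 2%N then 1 else 0)
  else 0.
(* phase-1 completion at a server with exactly i jobs, job leaves; next job
   (if any) starts in phase 1 *)
Definition d_1out (i : nat) : nat -> nat -> R := fun j m =>
  if (j == i) && (m == 1%N) then -1 else 0.
(* phase-2 completion at a server with exactly i jobs; next job (if any)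
   starts in phase 1 *)
Definition d_2out (i : nat) : nat -> nat -> R := fun j m =>
  (if (1 <= j <= i)%N && (m == 2%N) then -1 else 0)
  + (if (1 <= j < i)%N && (m == 1%N) then 1 else 0).
(* arrival: s_{k,m} increases (no change if k > b: job lost) *)
Definition d_arr (k m0 : nat) : nat -> nat -> R := fun j m =>
  if (j == k) && (m == m0) then 1 else 0.

Definition events (N : nat) (lam mu1 mu2 p : R) (pol : state -> dest -> R)
  (s : state) : seq (R * state) :=
  [seq (p * mu1 * N%:R * (sv s i 1 - sv s i.+1 1), upd N s (d_12 i)) | i <- iota 1 b]
  ++ [seq ((1 - p) * mu1 * N%:R * (sv s i 1 - sv s i.+1 1), upd N s (d_1out i))
       | i <- iota 1 b]
  ++ [seq (mu2 * N%:R * (sv s i 2 - sv s i.+1 2), upd N s (d_2out i)) | i <- iota 1 b]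
  ++ (lam * N%:R * pol s None, upd N s (d_arr 1 1))
  :: [seq (lam * N%:R * pol s (Some im), upd N s (d_arr im.1.+2 im.2.+1))
       | im <- enum {: 'I_b * 'I_2}].

Definition q (N : nat) (lam mu1 mu2 p : R) (pol : state -> dest -> R)
  (s s' : state) : R :=
  \sum_(e <- events N lam mu1 mu2 p pol s) (if e.2 == s' then e.1 else 0).

(* Drift: sum over s' != s of q_{s,s'} (V s' - V s); q_{s,.} vanishes outside
   the (finite) list of targets of events, so summing over that list is the
   sum over the whole state space. *)
Definition drift (N : nat) (lam mu1 mu2 p : R) (pol : state -> dest -> R)
  (V : state -> R) (s : state) : R :=
  \sum_(s' <- undup [seq e.2 | e <- events N lam mu1 mu2 p pol s] | s' != s)
     q N lam mu1 mu2 p pol s s' * (V s' - V s).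

Definition Vly (p mu2 : R) (s : state) : R := sv s 1 2 - p / mu2.

End Defs.

(* Every job enters service in phase 1, so neither arrivals nor departures
   from phase 1 change s_{1,2}; it grows only through phase-1 completions
   that continue to phase 2 and shrinks only through phase-2 completions.
   Summing over the queue lengths, both rates telescope and the drift of V
   is exactly p mu1 s_{1,1} - mu2 s_{1,2}, whatever the dispatching policy.
   Since s_{1,1} <= 1 - s_{1,2} and p mu1 + mu2 = mu1 mu2, this is at most
   -mu1 mu2 V(s), which gives the bound. *)

From mathcomp Require Import all_boot all_order all_algebra.
From mathcomp Require Import reals exp.
From mathcomp Require Import ring lra.
Import Order.TTheory GRing.Theory Num.Theory.
Local Open Scope ring_scope.

Lemma sum_if_eq_uniq (R : nmodType) (T : eqType) (r : seq T) (x : T) (c : R) :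
  uniq r -> x \in r -> \sum_(y <- r) (if x == y then c else 0) = c.
Proof.
move=> ur xr; rewrite (big_rem x) //= eqxx big1_seq ?addr0 // => y /andP[_ yr].
by case: eqP yr => // <-; rewrite mem_rem_uniqF.
Qed.

Lemma drift_of_rates (R : pzRingType) (T : eqType) (l : seq (R * T)) (s : T)
    (V : T -> R) :
  \sum_(s' <- undup [seq e.2 | e <- l] | s' != s)
     (\sum_(e <- l) (if e.2 == s' then e.1 else 0)) * (V s' - V s)
  = \sum_(e <- l) e.1 * (V e.2 - V s).
Proof.
rewrite big_mkcond.
have self_term s' : (if s' != s then
    (\sum_(e <- l) (if e.2 == s' then e.1 else 0)) * (V s' - V s) else 0)
    = \sum_(e <- l) (if e.2 == s' then e.1 * (V e.2 - V s) else 0).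
  rewrite mulr_suml; case: eqP => [->|_]; last first.
    by apply: eq_bigr => e _; case: eqP => [->|_]; rewrite ?mul0r.
  by rewrite /= big1 // => e _; case: eqP => [->|_]; rewrite ?subrr ?mulr0.
under eq_bigr do rewrite self_term.
rewrite exchange_big; apply: eq_big_seq => e el.
by apply: sum_if_eq_uniq; rewrite ?undup_uniq // mem_undup map_f.
Qed.

Section StateCoordinates.
Variables (R : realType) (b N : nat).
Implicit Type s : state R b.

Lemma sv_upd s d i m : (1 <= i <= b)%N -> (1 <= m <= 2)%N ->
  sv (upd N s d) i m = sv s i m + d i m / N%:R.
Proof.
move=> /andP[i1 ib] /andP[m1 m2]; rewrite /sv i1 m1.
case: insubP => [i' _ vi|]; last by move=> /negP[]; rewrite prednK.
case: insubP => [m' _ vm|]; last by move=> /negP[]; rewrite prednK.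
by rewrite /upd mxE vi vm !prednK.
Qed.

Lemma sv_beyond_b s m : sv s b.+1 m = 0.
Proof.
rewrite /sv /=; case: ifP => // _.
by case: insubP => [i' _ vi|//]; have := ltn_ord i'; rewrite vi ltnn.
Qed.

Lemma Vly_upd p mu2 s d : (0 < b)%N ->
  Vly p mu2 (upd N s d) - Vly p mu2 s = d 1%N 2%N / N%:R.
Proof. by move=> b0; rewrite /Vly sv_upd ?b0 //; ring. Qed.

Lemma telescope_rates (c k : R) (f g : nat -> R) : (0 < N)%N ->
  (forall i, (1 <= i)%N -> g i = k) ->
  \sum_(i <- iota 1 b) c * N%:R * (f i - f i.+1) * (g i / N%:R)
  = c * k * (f 1%N - f b.+1).
Proof.
move=> N0 gk; have NR : (N%:R : R) != 0 by rewrite pnatr_eq0 -lt0n.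
have -> : iota 1 b = index_iota 1 b.+1 by rewrite /index_iota subn1.
rewrite (telescope_sumr_eq (fun j => - (c * k * f j))) //; first by ring.
by move=> j /andP[j1 _]; rewrite gk //; field.
Qed.

End StateCoordinates.

Lemma drift_VlyE (R : realType) (N b : nat) (lam mu1 mu2 p : R)
    (pol : state R b -> dest b -> R) (s : state R b) :
  (0 < N)%N -> (0 < b)%N ->
  drift N lam mu1 mu2 p pol (Vly p mu2) s = p * mu1 * sv s 1 1 - mu2 * sv s 1 2.
Proof.
move=> N0 b0.
rewrite /drift /q drift_of_rates /events !big_cat big_cons /= !big_map.
under eq_bigr do rewrite /= Vly_upd //.
under [X in _ + (X + _)]eq_bigr do rewrite /= Vly_upd //.
under [X in _ + (_ + (X + _))]eq_bigr do rewrite /= Vly_upd //.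
under [X in _ + (_ + (_ + (_ + X)))]eq_bigr do rewrite /= Vly_upd //.
rewrite Vly_upd //.
rewrite (telescope_rates _ _ _ _ 1 _ (fun i => d_12 R i 1 2)) //; last first.
  by move=> i i1; rewrite /d_12 /= ifT.
rewrite (telescope_rates _ _ _ _ (-1) (fun i => sv s i 2)
    (fun i => d_2out R i 1 2)) //;
  last by move=> i i1; rewrite /d_2out /= i1 andbF addr0.
rewrite big1 => [|i _]; last by rewrite /d_1out andbF mul0r mulr0.
rewrite big1 => [|i _]; last by rewrite /d_arr /= mul0r mulr0.
rewrite /d_arr /= mul0r mulr0 !sv_beyond_b; ring.
Qed.

Lemma drift_Vly_le (R : realType) (N b : nat) (lam mu1 mu2 p : R)
    (pol : state R b -> dest b -> R) (s : state R b) :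
  (0 < N)%N -> (0 < b)%N -> 0 < mu1 -> 0 < mu2 -> 0 <= p ->
  mu1^-1 + p / mu2 = 1 -> sv s 1 1 + sv s 1 2 <= 1 ->
  drift N lam mu1 mu2 p pol (Vly p mu2) s <= - (mu1 * mu2) * Vly p mu2 s.
Proof.
move=> N0 b0 mu10 mu20 p0 hmu hs1; rewrite drift_VlyE // /Vly.
have [ne1 ne2] : mu1 != 0 /\ mu2 != 0 by rewrite !gt_eqF.
have balance : p * mu1 + mu2 = mu1 * mu2.
  by rewrite -[RHS]mulr1 -hmu; field; rewrite ne1 ne2.
have : p * mu1 * sv s 1 1 <= p * mu1 * (1 - sv s 1 2).
  by apply: ler_wpM2l; [exact: mulr_ge0 p0 (ltW mu10) | lra].
rewrite (_ : - (mu1 * mu2) * _ = p * mu1 - mu1 * mu2 * sv s 1 2); last by field.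
by rewrite -balance; lra.
Qed.

Theorem lemma11 (R : realType) (N b : nat) (lam mu1 mu2 p : R)
  (pol : state R b -> dest b -> R) :
  (0 < N)%N -> (0 < b)%N ->
  0 < lam -> 0 < mu1 -> 0 < mu2 -> 0 <= p -> p < 1 ->
  mu1^-1 + p / mu2 = 1 ->
  is_policy N pol ->
  forall s : state R b, in_SN N s ->
  ln (N%:R : R) / (4 * Num.sqrt (N%:R : R)) <= Vly p mu2 s ->
  drift N lam mu1 mu2 p pol (Vly p mu2) s
    <= - (mu1 * mu2 / 4) * (ln (N%:R : R) / Num.sqrt (N%:R : R)).
Proof.
move=> N0 b0 _ mu10 mu20 p0 _ hmu _ s [_ _ _ hs1 _] hV.
apply: (@le_trans _ _ (- (mu1 * mu2) * Vly p mu2 s)); first exact: drift_Vly_le.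
have sqrtN0 : Num.sqrt (N%:R : R) != 0 by rewrite gt_eqF // sqrtr_gt0 ltr0n.
rewrite (_ : - (mu1 * mu2 / 4) * _ = - (mu1 * mu2) * (ln N%:R / (4 * Num.sqrt N%:R)));
  last by field.
by rewrite !mulNr lerN2 ler_wpM2l // mulr_ge0 ?ltW.
Qed.
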